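(* Let $S$ be an isolated invariant set for $f$ with a Morse decomposition $\mathcal M(\mathcal P,<)=\{M_p:p\in\mathcal P\}$, and let $P=(N,L)$ be a filtration pair for $S$ with pointed space map $f_P:N_L\to N_L$. Let $\hat S=\operatorname{Inv}N_L$ (with respect to $f_P$). Let $\hat{\mathcal P}=\mathcal P\cup\{0\}$ with the order extending $<$ by $0<p$ for all $p\in\mathcal P$, and let $\hat M_p=M_p$ for $p\in\mathcal P$ (viewed in $N_L$ via the quotient map, which is injective on $N\setminus L\supset S$) and $\hat M_0=\{[L]\}$. Then $\hat{\mathcal M}(\hat{\mathcal P},<)=\{\hat M_p:p\in\hat{\mathcal P}\}$ is a Morse decomposition of $\hat S$ for the map $f_P$.
   Context: Let $X$ be a locally compact metric space, $U\subset X$ open and $f:U\to X$ continuous (the same definitions below apply to any continuous self-map, in particular to $f_P$ on $N_L$). A solution through $x$ is a map $\sigma:\mathbb Z\to U$ with $\sigma(0)=x$ and $f(\sigma(n))=\sigma(n+1)$ for all $n$; for $N\subset U$, $\operatorname{Inv}N$ is the set of $x\in N$ admitting a solution through $x$ with values in $N$. A compact $N$ is an isolating neighborhood if $\operatorname{Inv}N\subset\operatorname{Int}N$; $S$ is an isolated invariant set if $S=\operatorname{Inv}N$ for some isolating neighborhood $N$. The exit set is $N^-=\{x\in N:f(x)\notin\operatorname{Int}N\}$. A filtration pair for $S$ is a pair of compact sets $L\subset N$ in the interior of the domain of $f$, each the closure of its interior, with (1) $\operatorname{cl}(N\setminus L)$ an isolating neighborhood and $\operatorname{Inv}\operatorname{cl}(N\setminus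 L)=S$; (2) $L$ a neighborhood of $N^-$ in $N$; (3) $f(L)\cap\operatorname{cl}(N\setminus L)=\emptyset$. $N_L=N/L$ with $L$ collapsed to the base point $[L]$ (if $L=\emptyset$, a disjoint point $[L]$ is adjoined), $p:N\to N_L$ the quotient map, and $f_P([L])=[L]$, $f_P(p(x))=p(f(x))$ for $x\in N\setminus L$. $\omega(x)=\bigcap_{K>0}\operatorname{cl}\big(\bigcup_{n>K}\{f^n(x)\}\big)$, $\omega(\sigma)=\omega(\sigma(0))$, $\alpha(\sigma)=\bigcap_{K>0}\operatorname{cl}\big(\bigcup_{n>K}\{\sigma(-n)\}\big)$. For a finite set $\mathcal P$ with a partial order $<$ (irreflexive, transitive), a collection $\{M_p\subset S:p\in\mathcal P\}$ of pairwise disjoint isolated invariant sets is a Morse decomposition of an invariant set $S$ if for every $x\in S$ and every solution $\sigma:\mathbb Z\to S$ through $x$, either $\sigma(\mathbb Z)\subset M_p$ for some $p$, or $\omega(\sigma)\subset M_p$ and $\alpha(\sigma)\subset M_q$ for some $p<q$. *)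

From HB Require Import structures.
From mathcomp Require Import all_boot all_order all_algebra.
From mathcomp Require Import all_classical all_reals all_analysis.
Set Implicit Arguments. Unset Strict Implicit. Unset Printing Implicit Defensive.
Import Order.TTheory GRing.Theory Num.Theory.
Local Open Scope classical_set_scope.

(* f is given as a total function T -> T; only its values on U matter. *)
Section Dynamics.
Context {T : topologicalType} (U : set T) (f : T -> T).

Definition solution (x : T) (sigma : int -> T) : Prop :=
  [/\ sigma 0%R = x, (forall n, U (sigma n)) &
      (forall n, f (sigma n) = sigma (n + 1)%R)].

Definition InvS (N : set T) : set T :=
  [set x | N x /\ exists sigma, solution x sigma /\ forall n, N (sigma n)].

Definition isolating_neighborhood (N : set T) : Prop :=
  [/\ compact N, N `<=` U & InvS N `<=` interior N].

Definition isolated_invariant_set (S : set T) : Prop :=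
  exists N, isolating_neighborhood N /\ S = InvS N.

Definition exit_set (N : set T) : set T :=
  [set x | N x /\ ~ interior N (f x)].

Definition omega_limit (x : T) : set T :=
  \bigcap_(K in [set K : nat | (0 < K)%N])
     closure [set iter n f x | n in [set n : nat | (K < n)%N]].

Definition omega_sol (sigma : int -> T) : set T := omega_limit (sigma 0%R).

Definition alpha_sol (sigma : int -> T) : set T :=
  \bigcap_(K in [set K : nat | (0 < K)%N])
     closure [set sigma (- (n%:Z))%R | n in [set n : nat | (K < n)%N]].

Definition Morse_decomposition (S : set T) (P : finType) (lt : rel P)
    (M : P -> set T) : Prop :=
  [/\ (irreflexive lt /\ transitive lt),
      (forall p, M p `<=` S),
      (forall p q, p != q -> (M p `&` M q) = set0),
      (forall p, isolated_invariant_set (M p)) &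
      (forall x sigma, S x -> solution x sigma -> (forall n, S (sigma n)) ->
          (exists p, range sigma `<=` M p) \/
          (exists p q, lt p q /\ omega_sol sigma `<=` M p /\
                       alpha_sol sigma `<=` M q))].

Definition filtration_pair (S N L : set T) : Prop :=
  [/\ (compact N /\ compact L /\ L `<=` N),
      (N `<=` interior U /\
       closure (interior N) = N /\ closure (interior L) = L),
      (isolating_neighborhood (closure (N `\` L)) /\
         InvS (closure (N `\` L)) = S),
      (* L is a neighborhood of N^- in N *)
      (exists W, open W /\ exit_set N `<=` W /\ N `&` W `<=` L) &
      (f @` L `&` closure (N `\` L)) = set0].

End Dynamics.

(* The pointed quotient space N_L = N/L.  Points are [L] (= None) and  *)
(* the points of N \ L (= Some x).  If L is empty, [L] is a disjoint   *)
(* adjoined point.                                                     *)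
Definition pquot {X : topologicalType} (N L : set X) : Type :=
  option (set_type (N `\` L)).

HB.instance Definition _ (X : topologicalType) (N L : set X) :=
  Choice.on (pquot N L).

Section PQuot.
Context {X : topologicalType} (N L : set X).

(* the quotient map p : N -> N_L (extended by [L] outside N) *)
Definition pq (x : X) : pquot N L :=
  match pselect (x \in N `\` L) with
  | left h => Some (exist _ x h)
  | right _ => None
  end.

(* quotient topology: V open iff p^{-1}(V) is open in the subspace N *)
Definition pquot_open (V : set (pquot N L)) : Prop :=
  exists W : set X, open W /\ N `&` (pq @^-1` V) = N `&` W.

Lemma pquot_openT : pquot_open setT.
Proof. by exists setT; split; [exact: openT|]. Qed.

Lemma pquot_openI : setI_closed pquot_open.
Proof.
move=> A B [WA [oA eA]] [WB [oB eB]]; exists (WA `&` WB); split.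
  exact: openI.
rewrite preimage_setI.
rewrite (_ : N `&` (pq @^-1` A `&` pq @^-1` B) =
             (N `&` pq @^-1` A) `&` (N `&` pq @^-1` B)); last first.
  by rewrite setIACA setIid.
by rewrite eA eB setIACA setIid.
Qed.

Lemma pquot_op_bigU (I : Type) (F : I -> set (pquot N L)) :
  (forall i, pquot_open (F i)) -> pquot_open (\bigcup_i F i).
Proof.
move=> hF; have [W hW] := choice hF.
exists (\bigcup_i W i); split.
  by apply: bigcup_open => i _; case: (hW i).
rewrite preimage_bigcup !setI_bigcupr; apply: eq_bigcupr => i _.
by case: (hW i).
Qed.

HB.instance Definition _ := isOpenTopological.Build (pquot N L)
  pquot_openT pquot_openI pquot_op_bigU.

Definition fP (f : X -> X) (y : pquot N L) : pquot N L :=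
  match y with
  | None => None
  | Some x => pq (f (val x))
  end.

End PQuot.

(* the extended index set P^ = P + {0} (0 = None) with 0 < p *)
Definition hat_lt {P : finType} (lt : rel P) : rel (option P) :=
  fun a b => match a, b with
             | None, Some _ => true
             | Some p, Some q => lt p q
             | _, _ => false
             end.

Definition hat_M {X : topologicalType} (N L : set X) {P : finType}
    (M : P -> set X) (a : option P) : set (pquot N L) :=
  match a with
  | None => [set None]
  | Some p => pq N L @` M p
  end.

Arguments pq {X} N L x.
Arguments fP {X} N L f y.
Arguments hat_M {X} N L {P} M a.
Arguments pquot {X} N L.

(* The points of N_L other than the base point [L] are the points of N \ L,
   where f_P acts as f.  A solution of f_P is therefore either constantly [L],
   or contained in N \ L, or contained in N \ L up to some time and equal to
   [L] afterwards.  In the second case it is a solution of f in cl(N \ L),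
   hence lies in S, and the Morse decomposition of S applies; its limit sets
   lie in S, away from L, so the quotient map carries them to the limit sets
   in N_L.  In the third case the omega-limit set is {[L]} and the past is a
   backward orbit of f in cl(N \ L), whose alpha-limit set A is a compact
   invariant subset of S.  A lies in a single Morse set M_q: take q maximal
   among the Morse sets meeting A; if A left an isolating neighbourhood N_q
   of M_q, the backward orbit would accumulate at a point of A not interior
   to N_q whose forward orbit stays in N_q, and the solution through it would
   have its omega-limit set in M_q and its alpha-limit set in a Morse set
   above q.  Finally {[L]} is isolated thanks to an open Q containing
   cl(N \ L) whose closure misses f(L), and the image of M_p by the image of
   the intersection of N_p, cl(N \ L) and f^-1(cl(N \ L)), which avoids L. *)

From HB Require Import structures.
From mathcomp Require Import all_boot all_order all_algebra.
From mathcomp Require Import all_classical all_reals all_analysis.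
From mathcomp Require Import zify.
Set Implicit Arguments. Unset Strict Implicit. Unset Printing Implicit Defensive.
Import Order.TTheory GRing.Theory Num.Theory.
Local Open Scope classical_set_scope.

Section LimitSet.
Context {T : topologicalType}.

Lemma compact_directed_cluster (C : set T) (I : Type) (D : set I) (B : I -> set T) :
  compact C -> (exists i, D i) ->
  (forall i j, D i -> D j -> exists2 k, D k & B k `<=` B i `&` B j) ->
  (forall i, D i -> B i !=set0) -> (forall i, D i -> B i `<=` C) ->
  exists2 u, C u & forall i, D i -> closure (B i) u.
Proof.
move=> cC [i0 Di0] dir ne sub.
have FF : Filter (filter_from D B) by apply: filter_from_filter; [exists i0|].
have PF : ProperFilter (filter_from D B) by apply: filter_from_proper.
have [|u [Cu clu]] := cC _ PF; first by exists i0 => //; apply: sub.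
by exists u => // i Di W Wu; apply: (clu (B i) W) => //; exists i.
Qed.

Definition limit_set (s : nat -> T) : set T :=
  \bigcap_(K in [set K : nat | (0 < K)%N])
     closure [set s n | n in [set n : nat | (K < n)%N]].

Lemma limit_setP (s : nat -> T) z :
  limit_set s z <-> forall K W, nbhs z W -> exists n, (K < n)%N /\ W (s n).
Proof.
split.
  move=> sz K W zW; have [_ [[n Kn <-] Wn]] := sz K.+1 isT W zW.
  by exists n; split => //; apply: ltnW.
move=> H K _ W zW; have [n [Kn Wn]] := H K W zW.
by exists (s n); split => //; exists n.
Qed.

Lemma eq_limit_set (s t : nat -> T) : s =1 t -> limit_set s = limit_set t.
Proof. by move=> /funext ->. Qed.

Lemma limit_set_shift (s : nat -> T) k : limit_set (fun n => s (n + k)%N) = limit_set s.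
Proof.
apply/seteqP; split => z /limit_setP H; apply/limit_setP => K W zW.
  have [n [Kn Wn]] := H K W zW; exists (n + k)%N; split => //; lia.
have [n [Kn Wn]] := H (K + k)%N W zW; exists (n - k)%N; split; first lia.
by rewrite subnK //; lia.
Qed.

Lemma limit_set_shift1 (s : nat -> T) : limit_set (fun n => s n.+1) = limit_set s.
Proof. by rewrite -(limit_set_shift s 1); apply: eq_limit_set => n; rewrite addn1. Qed.

Lemma closed_limit_set (s : nat -> T) : closed (limit_set s).
Proof. by apply: closed_bigI => K _; apply: closed_closure. Qed.

Lemma limit_set_sub (s : nat -> T) (A : set T) K0 :
  closed A -> (forall n, (K0 < n)%N -> A (s n)) -> limit_set s `<=` A.
Proof.
move=> cA sA z /limit_setP H; apply: cA => W zW.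
by have [n [Kn Wn]] := H K0 W zW; exists (s n); split => //; apply: sA.
Qed.

Lemma compact_limit_set_nonempty (s : nat -> T) (C : set T) :
  compact C -> (forall n, C (s n)) -> exists2 z, limit_set s z & C z.
Proof.
move=> cC sC.
have [||||u Cu H] := @compact_directed_cluster C nat setT
  (fun K => [set s n | n in [set n : nat | (K < n)%N]]) cC.
- by exists 0%N.
- move=> i j _ _; exists (maxn i j) => // _ [n /= Kn <-].
  by split; exists n => //=; lia.
- by move=> i _; exists (s i.+1); apply: imageP => /=.
- by move=> i _ _ [n _ <-].
exists u => //; apply/limit_setP => K W zW.
by have [_ [[n Kn <-] Wn]] := H K I W zW; exists n.
Qed.

Lemma continuous_limit_set (f : T -> T) (a b : nat -> T) z :
  {for z, continuous f} -> (forall n, f (a n) = b n) ->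
  limit_set a z -> limit_set b (f z).
Proof.
move=> fc ab /limit_setP H; apply/limit_setP => K W zW.
have /(H K) [n [Kn Wn]] : nbhs z (f @^-1` W) by apply: fc.
by exists n; rewrite -ab.
Qed.

End LimitSet.

Lemma omega_limitE {T : topologicalType} (f : T -> T) x :
  omega_limit f x = limit_set (fun n => iter n f x).
Proof. by []. Qed.

Lemma alpha_solE {T : topologicalType} (sigma : int -> T) :
  alpha_sol sigma = limit_set (fun n => sigma (- (Posz n))%R).
Proof. by []. Qed.

Section Solutions.
Context {T : topologicalType} (U : set T) (f : T -> T).

Lemma solution_shift x sigma k : solution U f x sigma ->
  solution U f (sigma k) (fun n => sigma (n + k)%R).
Proof.
move=> [s0 sU sf]; split => //=; first by rewrite add0r.
by move=> n; rewrite sf addrAC.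
Qed.

Lemma solution_iter x sigma n : solution U f x sigma -> iter n f x = sigma (Posz n).
Proof.
move=> [s0 sU sf]; elim: n => [|n IH] /=; first by rewrite s0.
by rewrite IH sf -[n.+1]addn1 PoszD.
Qed.

Lemma omega_solE x sigma : solution U f x sigma ->
  omega_sol f sigma = limit_set (fun n => sigma (Posz n)).
Proof.
move=> sol; rewrite /omega_sol omega_limitE; case: (sol) => s0 _ _; rewrite s0.
by apply: eq_limit_set => n; apply: solution_iter sol.
Qed.

Lemma InvS_solution K x sigma : solution U f x sigma -> (forall n, K (sigma n)) ->
  forall n, InvS U f K (sigma n).
Proof.
move=> sol sK n; split; first exact: sK.
by exists (fun m => sigma (m + n)%R); split; [exact: solution_shift sol|].
Qed.

Lemma InvS_f K x : InvS U f K x -> InvS U f K (f x).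
Proof.
move=> [Kx [s [sol sK]]]; have := InvS_solution sol sK 1.
by case: sol => s0 _ sf; rewrite -(add0r 1%R) -sf s0.
Qed.

Lemma InvS_preimage K x : InvS U f K x -> exists2 y, InvS U f K y & f y = x.
Proof.
move=> [Kx [s [sol sK]]]; exists (s (-1)%R); first exact: (InvS_solution sol sK).
by case: sol => s0 _ sf; rewrite sf addNr s0.
Qed.

Lemma invariant_solution (A : set T) : A `<=` U ->
  (forall z, A z -> A (f z)) -> (forall z, A z -> exists2 z', A z' & f z' = z) ->
  forall z, A z -> exists sigma, solution U f z sigma /\ forall n, A (sigma n).
Proof.
move=> AU fw bw z Az.
have /choice [g hg] : forall y, exists y', A y -> A y' /\ f y' = y.
  move=> y; case: (pselect (A y)) => [/bw [y' Ay' fy']|nA]; first by exists y'.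
  by exists y.
have Ag n : A (iter n g z) by elim: n => [|n IH] //=; case: (hg _ IH).
have Af n : A (iter n f z) by elim: n => [|n IH] //=; apply: fw.
pose s (n : int) := if n is Posz k then iter k f z else iter (absz n) g z.
have sA n : A (s n) by case: n => n; [exact: Af | exact: (Ag n.+1)].
exists s; split => //; split => // [n|]; first exact/AU/sA.
case=> [k|[|k]] /=; first by rewrite addn1.
  by case: (hg z Az).
by rewrite subn1; case: (hg _ (Ag k.+1)).
Qed.

Lemma sub_InvS (A K : set T) : A `<=` K -> A `<=` U ->
  (forall z, A z -> A (f z)) -> (forall z, A z -> exists2 z', A z' & f z' = z) ->
  A `<=` InvS U f K.
Proof.
move=> AK AU fw bw z Az; split; first exact: AK.
have [s [sol sA]] := invariant_solution AU fw bw Az.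
by exists s; split => // n; apply: AK.
Qed.

End Solutions.

Section ContinuousDynamics.
Context {T : topologicalType} (hT : hausdorff_space T) (U : set T) (f : T -> T).
Hypothesis fc : forall x, U x -> {for x, continuous f}.

Lemma continuous_iter n z : (forall j, (j < n)%N -> U (iter j f z)) ->
  {for z, continuous (iter n f)}.
Proof.
elim: n => [|n IH] h; first exact: cvg_id.
have -> : iter n.+1 f = f \o iter n f by apply: funext.
apply: continuous_comp; first by apply: IH => j jn; apply: h; lia.
exact/fc/h.
Qed.

Lemma compact_directed_preimage (C : set T) (z : T) (I : Type) (D : set I)
    (B : I -> set T) :
  compact C -> C `<=` U -> (exists i, D i) ->
  (forall i j, D i -> D j -> exists2 k, D k & B k `<=` B i `&` B j) ->
  (forall i, D i -> B i !=set0) -> (forall i, D i -> B i `<=` C) ->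
  (forall W, nbhs z W -> exists2 i, D i & B i `<=` f @^-1` W) ->
  exists2 u, C u & f u = z /\ forall i, D i -> closure (B i) u.
Proof.
move=> cC CU ex dir ne sub pre.
have [u Cu clu] := compact_directed_cluster cC ex dir ne sub.
exists u => //; split => //; apply: hT => A W uA zW.
have [i Di BiW] := pre W zW.
have /(clu i Di) [v [Bv Av]] : nbhs u (f @^-1` A) by apply: (fc (CU _ Cu)).
by exists (f v); split => //; apply: BiW.
Qed.

Lemma limit_set_preimage (C : set T) (a b : nat -> T) z :
  compact C -> C `<=` U -> (forall n, C (a n)) -> (forall n, f (a n) = b n) ->
  limit_set b z -> exists2 z', limit_set a z' & f z' = z.
Proof.
move=> cC CU aC ab /limit_setP bz.
have [|||||u Cu [fu H]] := @compact_directed_preimage C z (nat * set T)%type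
  (fun p => nbhs z p.2)
  (fun p => [set a n | n in [set n | (p.1 < n)%N /\ p.2 (b n)]]) cC CU.
- by exists (0%N, setT); apply: filterT.
- move=> [i W1] [j W2] /= zW1 zW2; exists (maxn i j, W1 `&` W2) => /=.
    exact: filterI.
  by move=> _ [n [Kn [W1n W2n]] <-]; split; exists n => //=; split => //; lia.
- move=> [K W] /= zW; have [n [Kn Wn]] := bz K W zW.
  by exists (a n); apply: imageP.
- by move=> [K W] _ _ [n _ <-].
- by move=> W zW; exists (0%N, W) => // _ [n [_ Wn] <-] /=; rewrite ab.
exists u => //; apply/limit_setP => K W uW.
have [_ [[n [Kn _] <-] Wn]] := H (K, setT) filterT W uW.
by exists n.
Qed.

Lemma closed_InvS K : compact K -> K `<=` U -> closed (InvS U f K).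
Proof.
move=> cK KU; have clK : closed K by apply: compact_closed.
have clIK : closure (InvS U f K) `<=` K.
  by move=> z /(closureS (fun x (h : InvS U f K x) => h.1)); apply: clK.
suff : closure (InvS U f K) `<=` InvS U f K by [].
apply: sub_InvS => //; first by move=> z /clIK; apply: KU.
  move=> z clz W fzW.
  have /clz [v [Iv Wv]] : nbhs z (f @^-1` W) by apply: (fc (KU _ (clIK _ clz))).
  by exists (f v); split => //; exact: InvS_f.
move=> z clz.
have [|||||u Ku [fu H]] := @compact_directed_preimage K z (set T) (nbhs z)
  (fun W => [set v | InvS U f K v /\ W (f v)]) cK KU.
- by exists setT; apply: filterT.
- move=> W1 W2 zW1 zW2; exists (W1 `&` W2); first exact: filterI.
  by move=> v [Iv [W1v W2v]]; split; split.
- move=> W zW; have [v [Iv Wv]] := clz W zW.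
  by have [y Iy fy] := InvS_preimage Iv; exists y; split => //; rewrite fy.
- by move=> W _ v [[]].
- by move=> W zW; exists W => // v [].
by exists u => //; apply: (closureS _ (H setT filterT)) => v [].
Qed.

Lemma nbhs_iter_interior (K : set T) z k :
  (forall i, (i <= k)%N -> U (iter i f z) /\ interior K (iter i f z)) ->
  nbhs z [set x | forall i, (i <= k)%N -> K (iter i f x)].
Proof.
elim: k => [|k IH] h.
  apply: filterS (h 0%N (leqnn 0)).2 => x Kx i.
  by rewrite leqn0 => /eqP ->.
have /(continuous_iter (n := k.+1)) iter_c : forall j, (j < k.+1)%N -> U (iter j f z).
  by move=> j jk; apply: (h j (ltnW jk)).1.
have Kk : nbhs z (iter k.+1 f @^-1` K) by apply/iter_c/(h _ (leqnn _)).2.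
have /IH Kle : forall i, (i <= k)%N -> U (iter i f z) /\ interior K (iter i f z).
  by move=> i ik; apply: h; lia.
apply: filterS (filterI Kle Kk) => x [Kx Kkx] i.
by rewrite leq_eqVlt => /orP [/eqP -> //|]; rewrite ltnS; apply: Kx.
Qed.

Lemma omega_limit_sub_InvS K x : compact K -> K `<=` U ->
  (forall n, K (iter n.+1 f x)) -> omega_limit f x `<=` InvS U f K.
Proof.
move=> cK KU Kx; pose a n := iter n.+1 f x.
have -> : omega_limit f x = limit_set a by rewrite omega_limitE -limit_set_shift1.
have aK : limit_set a `<=` K.
  by apply: (limit_set_sub (K0 := 0%N)) => [|n _]; [exact: compact_closed|exact: Kx].
apply: sub_InvS => // [z /aK /KU //|z az|z].
  have /KU/fc fcz := aK _ az.
  by rewrite -limit_set_shift1; apply: (continuous_limit_set fcz _ az).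
move=> az; rewrite -limit_set_shift1 in az.
exact: (limit_set_preimage cK KU Kx (fun n => erefl) az).
Qed.

Lemma closed_setI_preimage (A B : set T) : A `<=` U -> closed A -> closed B ->
  closed (A `&` f @^-1` B).
Proof.
move=> AU clA clB x clx; have Ax : A x by apply/clA/(closureS _ clx) => ? [].
split => //; apply: clB => W fxW.
have /clx [z [[_ Bfz] Wfz]] : nbhs x (f @^-1` W) by apply: (fc (AU _ Ax)).
by exists (f z).
Qed.

End ContinuousDynamics.

Lemma ex_maximal (P : finType) (lt : rel P) (Q : P -> Prop) :
  irreflexive lt -> transitive lt -> (exists p, Q p) ->
  exists2 q, Q q & forall p, Q p -> ~ lt q p.
Proof.
move=> lt_irr lt_trans [p0 Qp0].
pose below q := #|[set r | lt r q]%SET|.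
pose Qb p := `[< Q p >].
have Qbp0 : Qb p0 by apply/asboolP.
case: (arg_maxnP below Qbp0) => q /asboolP Qq qmax.
exists q => // p Qp ltqp.
have : (below p <= below q)%N by apply: qmax; apply/asboolP.
apply/negP; rewrite -ltnNge; apply: proper_card; apply/properP; split.
  by apply/fintype.subsetP => r; rewrite !inE => rq; exact: lt_trans rq ltqp.
by exists q; rewrite !inE ?ltqp ?lt_irr.
Qed.

Definition Morse_alternative {T : topologicalType} (F : T -> T) {I : Type}
    (lt : rel I) (M : I -> set T) (sigma : int -> T) : Prop :=
  (exists p, range sigma `<=` M p) \/
  (exists p q, lt p q /\ omega_sol F sigma `<=` M p /\ alpha_sol sigma `<=` M q).

Section MorseDecomposition.
Context {T : topologicalType} (U : set T) (f : T -> T) (S : set T).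
Context (P : finType) (lt : rel P) (M : P -> set T).
Hypothesis hMorse : Morse_decomposition U f S lt M.

Lemma Morse_lt_irr : irreflexive lt.
Proof. by case: hMorse => -[]. Qed.

Lemma Morse_lt_trans : transitive lt.
Proof. by case: hMorse => -[]. Qed.

Lemma Morse_set_sub p : M p `<=` S.
Proof. by case: hMorse. Qed.

Lemma Morse_index_unique p q x : M p x -> M q x -> p = q.
Proof.
move=> Mpx Mqx; case: hMorse => _ _ disj _ _; apply/eqP; apply: contraT => /disj pq0.
by have : (M p `&` M q) x by []; rewrite pq0.
Qed.

Lemma Morse_set_isolated p :
  exists2 Np, isolating_neighborhood U f Np & M p = InvS U f Np.
Proof. by case: hMorse => _ _ _ /(_ p) [Np []]; exists Np. Qed.

Lemma Morse_set_f p x : M p x -> M p (f x).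
Proof. by have [Np _ ->] := Morse_set_isolated p; apply: InvS_f. Qed.

Lemma Morse_dichotomy x sigma : S x -> solution U f x sigma ->
  (forall n, S (sigma n)) -> Morse_alternative f lt M sigma.
Proof. by case: hMorse => _ _ _ _; apply. Qed.

End MorseDecomposition.

Section BackwardOrbit.
Context {T : topologicalType} (hT : hausdorff_space T) (U : set T) (f : T -> T).
Hypothesis fc : forall x, U x -> {for x, continuous f}.
Variable C : set T.
Hypotheses (cC : compact C) (CU : C `<=` U).
Variable y : nat -> T.
Hypotheses (yC : forall n, C (y n)) (yf : forall n, f (y n.+1) = y n).

Local Notation A := (limit_set y).

Lemma iter_backward_orbit i m : (i <= m)%N -> iter i f (y m) = y (m - i).
Proof.
elim: i m => [|i IH] m im /=; first by rewrite subn0.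
by rewrite IH; [have -> : (m - i = (m - i.+1).+1)%N by lia|lia].
Qed.

Lemma backward_limit_C : A `<=` C.
Proof. by apply: (limit_set_sub (K0 := 0%N)) => // *; apply: compact_closed. Qed.

Lemma backward_limit_f z : A z -> A (f z).
Proof.
move=> Az; have fcz := fc (CU (backward_limit_C Az)).
by rewrite -limit_set_shift1 in Az; apply: (continuous_limit_set fcz yf Az).
Qed.

Lemma backward_limit_iter n z : A z -> A (iter n f z).
Proof. by move=> Az; elim: n => [|n IH] //=; apply: backward_limit_f. Qed.

Lemma backward_limit_preimage z : A z -> exists2 z', A z' & f z' = z.
Proof.
move=> Az; have [z' az' fz'] := limit_set_preimage hT fc cC CU (fun n => yC n.+1) yf Az.
by exists z' => //; rewrite -limit_set_shift1.
Qed.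

Lemma backward_limit_U : A `<=` U.
Proof. exact: subset_trans backward_limit_C CU. Qed.

Lemma backward_limit_solution z : A z ->
  exists sigma, solution U f z sigma /\ forall n, A (sigma n).
Proof.
apply: invariant_solution;
  [exact: backward_limit_U|exact: backward_limit_f|exact: backward_limit_preimage].
Qed.

Lemma backward_limit_compact : compact A.
Proof. exact: subclosed_compact (@closed_limit_set _ y) cC backward_limit_C. Qed.

Lemma backward_orbit_first_exit (K : set T) m k n' :
  (k <= m)%N -> (forall i, (i <= k)%N -> K (iter i f (y m))) ->
  (m <= n')%N -> ~ K (y n') ->
  exists n, [/\ (m <= n)%N, ~ K (y n) & forall i, (0 < i <= k)%N -> K (y (n - i))].
Proof.
move=> km Km mn' nKn'.
have exP : exists j, (m <= j)%N && ~~ `[< K (y j) >].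
  by exists n'; rewrite mn'; apply/asboolPn.
case: (ex_minnP exP) => n /andP [mn /asboolPn nKn] nmin.
exists n; split => // i /andP [i0 ik]; case: (leqP m (n - i)) => h.
  apply: contrapT => nK.
  have : (n <= n - i)%N by apply: nmin; rewrite h; apply/asboolPn.
  lia.
have -> : (n - i = m - (m - (n - i)))%N by lia.
by rewrite -iter_backward_orbit; [apply: Km|]; lia.
Qed.

(* [u] is a cluster point of points [y n] outside [interior K] whose [k]
   predecessors lie in [K], for arbitrarily large [k] *)
Lemma backward_limit_exit_point (K : set T) z w :
  closed K -> A z -> (forall i, interior K (iter i f z)) -> A w -> ~ K w ->
  exists u, [/\ A u, ~ interior K u & forall i, (0 < i)%N -> K (iter i f u)].
Proof.
move=> clK Az zK Aw nKw.
have zU i : U (iter i f z) by apply/CU/backward_limit_C/backward_limit_iter.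
pose E k m n := [/\ (m < n)%N, (k <= n)%N, ~ interior K (y n) &
  forall i, (0 < i <= k)%N -> K (y (n - i))].
have exE k m : exists n, E k m n.
  have near_z := nbhs_iter_interior fc (k := k) (fun i _ => conj (zU i) (zK i)).
  have [m' [mm' Km']] := (limit_setP _ _).1 Az (m + k)%N _ near_z.
  have wnK : nbhs w (~` K) by apply: open_nbhs_nbhs; split => //; exact: closed_openC.
  have [n' [mn' nKn']] := (limit_setP _ _).1 Aw m' _ wnK.
  have [|n [m'n nKn Kn]] := backward_orbit_first_exit _ Km' (ltnW mn') nKn'.
    lia.
  by exists n; split => //; [lia|lia|move/interior_subset].
have [||||u Cu Hu] := @compact_directed_cluster T C (nat * nat)%type setT
  (fun p => [set y n | n in E p.1 p.2]) cC.
- by exists (0, 0)%N.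
- move=> [k1 m1] [k2 m2] _ _; exists (maxn k1 k2, maxn m1 m2) => //=.
  move=> _ [n [h1 h2 h3 h4] <-].
  by split; exists n => //; split => //; try lia; move=> i /andP [i0 ik]; apply: h4; lia.
- by move=> [k m] _; have [n En] := exE k m; exists (y n); apply: imageP.
- by move=> p _ _ [n _ <-].
have Au : A u.
  apply/limit_setP => m W uW.
  by have [_ [[n [mn _ _ _] <-] Wn]] := Hu (0%N, m) I W uW; exists n.
exists u; split => //.
  move=> uK; have /(Hu (0%N, 0%N) I) [_ [[n [_ _ nK _] <-] Kn]] : nbhs u (interior K).
    by apply: open_nbhs_nbhs; split => //; exact: open_interior.
  exact: nK.
move=> i i0; apply: contrapT => nK.
have uU j : (j < i)%N -> U (iter j f u).
  by move=> _; apply/CU/backward_limit_C/backward_limit_iter.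
have : nbhs u (iter i f @^-1` (~` K)).
  apply: (continuous_iter fc uU); apply: open_nbhs_nbhs; split => //.
  exact: closed_openC.
move=> /(Hu (i, 0%N) I) [_ [[n [_ iLn _ Kn] <-] nKn]].
by apply: nKn; rewrite /= iter_backward_orbit //; apply: Kn; rewrite i0 leqnn.
Qed.

Lemma backward_limit_limit_set (s : nat -> T) : (forall n, A (s n)) ->
  limit_set s `<=` A /\ limit_set s !=set0.
Proof.
move=> sA; split; first exact: (limit_set_sub (K0 := 0%N)) (@closed_limit_set _ y) _.
by have [v sv _] := compact_limit_set_nonempty backward_limit_compact sA; exists v.
Qed.

Variables (S : set T) (P : finType) (lt : rel P) (M : P -> set T).
Hypotheses (hMorse : Morse_decomposition U f S lt M) (SC : S = InvS U f C).

Lemma Morse_set_closed p : closed (M p).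
Proof. by have [Np [cNp NpU _] ->] := Morse_set_isolated hMorse p; apply: closed_InvS. Qed.

Lemma backward_limit_S : A `<=` S.
Proof.
rewrite SC; apply: sub_InvS; [exact: backward_limit_C|exact: backward_limit_U|
  exact: backward_limit_f|exact: backward_limit_preimage].
Qed.

Lemma backward_limit_Morse_dichotomy u : A u ->
  exists sigma, [/\ solution U f u sigma, forall n, A (sigma n) &
                    Morse_alternative f lt M sigma].
Proof.
move=> Au; have [s [sol sA]] := backward_limit_solution Au; exists s; split => //.
by apply: (Morse_dichotomy hMorse (backward_limit_S Au) sol) => n; apply: backward_limit_S.
Qed.

Lemma backward_limit_meets_Morse_set : exists p, (A `&` M p) !=set0.
Proof.
have [a Aa _] := compact_limit_set_nonempty cC yC.
have [s [[s0 _ _] sA [[p rp]|[p [_ [_ [om _]]]]]]] := backward_limit_Morse_dichotomy Aa.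
  by exists p, a; split => //; apply: rp; exists 0%R.
have [oA [v ov]] := backward_limit_limit_set (fun n => backward_limit_iter (n := n) Aa).
by exists p, v; split; [exact: oA|apply: om; rewrite /omega_sol s0].
Qed.

(* a point of [A] leaving [interior Nq] only backwards would have its
   omega-limit in [M q], so its alpha-limit would lie in a Morse set above [q] *)
Lemma backward_limit_no_exit_point q Nq u :
  (forall p, (A `&` M p) !=set0 -> ~ lt q p) ->
  isolating_neighborhood U f Nq -> M q = InvS U f Nq ->
  A u -> ~ interior Nq u -> (forall i, (0 < i)%N -> Nq (iter i f u)) -> False.
Proof.
move=> qmax [cNq NqU NqI] Mq Au nIu Nu.
have omq : omega_limit f u `<=` M q.
  by rewrite Mq; apply: omega_limit_sub_InvS => // n; apply: Nu.
have [_ [v omv]] := backward_limit_limit_set (fun n => backward_limit_iter (n := n) Au).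
have [s [sol sA [[r rr]|[p1 [p2 [lt12 [om1 al2]]]]]]] := backward_limit_Morse_dichotomy Au.
- have omr : omega_limit f u `<=` M r.
    apply: (limit_set_sub (K0 := 0%N)) => [|n _]; first exact: Morse_set_closed.
    by rewrite (solution_iter n sol); apply: rr; exists (Posz n).
  have rq : r = q := Morse_index_unique hMorse (omr _ omv) (omq _ omv).
  by apply/nIu/NqI; rewrite -Mq -rq; apply: rr; exists 0%R => //; case: sol.
- have p1q : p1 = q.
    apply: (Morse_index_unique hMorse (om1 v _) (omq _ omv)).
    by rewrite /omega_sol; case: sol => ->.
  have [alA [v2 alv2]] := backward_limit_limit_set (fun n => sA (- Posz n)%R).
  by apply: (qmax p2); [exists v2; split; [apply: alA|apply: al2]|rewrite -p1q].
Qed.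

Lemma backward_limit_sub_Morse_set : exists q, A `<=` M q.
Proof.
have [q Aq qmax] := ex_maximal (Morse_lt_irr hMorse) (Morse_lt_trans hMorse)
  backward_limit_meets_Morse_set.
have [Nq isoNq Mq] := Morse_set_isolated hMorse q; have [cNq NqU NqI] := isoNq.
suff ANq : A `<=` Nq.
  exists q; rewrite Mq; apply: sub_InvS => //;
    [exact: backward_limit_U|exact: backward_limit_f|exact: backward_limit_preimage].
move=> w Aw; apply: contrapT => nNw; have [z [Az Mqz]] := Aq.
have zI i : interior Nq (iter i f z).
  by apply: NqI; rewrite -Mq; elim: i => [|i IH] //=; apply: (Morse_set_f hMorse).
have [u [Au nIu Nu]] := backward_limit_exit_point (compact_closed hT cNq) Az zI Aw nNw.
exact: backward_limit_no_exit_point qmax isoNq Mq Au nIu Nu.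
Qed.

End BackwardOrbit.

Section PointedQuotient.
Context {X : topologicalType} (N L : set X).
Local Notation PQ := (pquot N L).
Local Notation pq := (pq N L).

Lemma NL_val (t : set_type (N `\` L)) : (N `\` L) (val t).
Proof. exact/set_mem/(valP t). Qed.

Lemma pq_val (t : set_type (N `\` L)) : pq (val t) = Some t.
Proof.
case: t => x h; rewrite /pq /=; case: pselect => [h'|nh]; last by [].
by rewrite (Prop_irrelevance h' h).
Qed.

Lemma pq_none x : ~ (N `\` L) x -> pq x = None.
Proof. by move=> nx; rewrite /pq; case: pselect => // h; case: nx; apply: set_mem. Qed.

Lemma pq_Some x t : pq x = Some t -> x = val t.
Proof. by rewrite /pq; case: pselect => // h [<-]. Qed.

Lemma pq_NL x : (N `\` L) x -> exists2 t, pq x = Some t & val t = x.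
Proof.
move=> h; pose t : set_type (N `\` L) := exist _ x (mem_set h).
by exists t => //; rewrite -[in LHS](_ : val t = x) // pq_val.
Qed.

Lemma pq_inj x1 x2 : (N `\` L) x1 -> pq x1 = pq x2 -> x1 = x2.
Proof. by move=> /pq_NL [t e1 <-] e; symmetry; apply: pq_Some; rewrite -e pq_val. Qed.

Lemma pqP x : ((N `\` L) x /\ exists2 t, pq x = Some t & val t = x) \/
              (~ (N `\` L) x /\ pq x = None).
Proof.
case: (pselect ((N `\` L) x)) => h; first by left; split; last exact: pq_NL.
by right; split; last exact: pq_none.
Qed.

(* a lift of points of [N_L] to [X]; the base point goes to the arbitrary [d] *)
Definition pval (d : X) (y : PQ) : X := if y is Some t then val t else d.

Lemma pq_pval d y : y <> None -> pq (pval d y) = y.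
Proof. by case: y => // t _; rewrite /= pq_val. Qed.

Lemma pval_NL d y : y <> None -> (N `\` L) (pval d y).
Proof. by case: y => // t _; apply: NL_val. Qed.

Lemma pquot_openP (O : set PQ) : open O ->
  exists W, open W /\ N `&` (pq @^-1` O) = N `&` W.
Proof. by []. Qed.

Definition pqset (W : set X) : set PQ :=
  fun y => if y is Some t then W (val t) else False.

Definition pqset_base (W : set X) : set PQ :=
  fun y => if y is Some t then W (val t) else True.

Lemma open_pqset W : closed L -> open W -> open (pqset W).
Proof.
move=> clL oW; exists (W `&` ~` L); split; first exact/openI/closed_openC.
apply/seteqP; split => x [Nx h]; split => //.
  move: h; rewrite /preimage /=.
  by case: (pqP x) => [[[_ nLx] [t -> ex]] h|[_ ->] //]; subst x.
case: h => Wx nLx; have [t e ex] := pq_NL (conj Nx nLx).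
by subst x; rewrite /preimage /= e.
Qed.

Lemma open_pqset_base W : open W -> L `<=` W -> open (pqset_base W).
Proof.
move=> oW LW; exists W; split => //.
apply/seteqP; split => x [Nx h]; split => //.
  move: h; rewrite /preimage /=; case: (pqP x) => [[_ [t -> ex]]|[nx _] _].
    by subst x.
  by apply: LW; apply: contrapT => nLx; apply: nx.
by rewrite /preimage /=; case: (pqP x) => [[_ [t -> ex]]|[_ ->]] //; subst x.
Qed.

Lemma pq_compact K : compact K -> K `<=` N -> compact (pq @` K).
Proof.
move=> cK KN F PF FK.
pose G := filter_from F (fun V => K `&` pq @^-1` V).
have FG : Filter G.
  apply: filter_from_filter; first by exists setT; exact: filterT.
  move=> V1 V2 F1 F2; exists (V1 `&` V2); first exact: filterI.
  by move=> x [Kx [h1 h2]]; split; split.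
have PG : ProperFilter G.
  apply: filter_from_proper => // V FV.
  have /filter_ex [_ [[x Kx <-] Vx]] : F (pq @` K `&` V) by apply: filterI.
  by exists x.
have [|x [Kx clx]] := cK G PG; first by exists setT; [exact: filterT|move=> x []].
exists (pq x); split; first by exists x.
move=> V O FV; rewrite nbhsE => -[Q [oQ Qx] QO].
have [W [oW e]] := pquot_openP oQ.
have Wx : W x.
  have : (N `&` (pq @^-1` Q)) x by split => //; apply: KN.
  by rewrite e => -[].
have [x' [[Kx' Vx'] Wx']] := clx (K `&` pq @^-1` V) W
  (ex_intro2 _ _ V FV (fun z h => h)) (open_nbhs_nbhs (conj oW Wx)).
exists (pq x'); split => //; apply: QO.
have : (N `&` W) x' by split => //; apply: KN.
by rewrite -e => -[].
Qed.

Section LimitSets.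
Hypotheses (clL : closed L) (cNL : compact (closure (N `\` L))).
Hypothesis hreg : @regular_space X.

Lemma limit_set_pq_Some (s : nat -> X) K0 t :
  (forall n, (K0 < n)%N -> (N `\` L) (s n)) ->
  limit_set (fun n => pq (s n)) (Some t) -> limit_set s (val t).
Proof.
move=> sNL /limit_setP H; apply/limit_setP => K W; rewrite nbhsE => -[W' [oW' W't] W'W].
have /H : nbhs (Some t : PQ) (pqset W').
  by apply: open_nbhs_nbhs; split; [exact: open_pqset|].
move=> /(_ (maxn K K0)) [n [Kn On]]; exists n; split; first lia.
apply: W'W; have [t' e <-] := pq_NL (sNL n ltac:(lia)).
by move: On; rewrite e.
Qed.

(* [u] clusters the terms [s n] lying in any given open [W] containing [L],
   since [pqset_base W] is a neighbourhood of the base point; by regularity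
   this forces [u] into [L] *)
Lemma limit_set_pq_None (s : nat -> X) K0 :
  (forall n, (K0 < n)%N -> (N `\` L) (s n)) ->
  limit_set (fun n => pq (s n)) None -> exists2 l, L l & limit_set s l.
Proof.
move=> sNL /limit_setP H.
have [||||u Cu Hu] := @compact_directed_cluster X (closure (N `\` L)) (nat * set X)%type
  (fun p => open p.2 /\ L `<=` p.2)
  (fun p => [set s n | n in [set n | [/\ (p.1 < n)%N, (K0 < n)%N & p.2 (s n)]]]) cNL.
- by exists (0%N, setT); split => //; exact: openT.
- move=> [i W1] [j W2] [oW1 LW1] [oW2 LW2]; exists (maxn i j, W1 `&` W2).
    by split; [exact: openI|move=> x Lx; split; [apply: LW1|apply: LW2]].
  move=> _ [n /= [Kn K0n [W1n W2n]] <-].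
  by split; exists n => //=; split => //; lia.
- move=> [K W] [oW LW].
  have /H : nbhs (None : PQ) (pqset_base W).
    by apply: open_nbhs_nbhs; split; [exact: open_pqset_base|].
  move=> /(_ (maxn K K0)) [n [Kn On]]; exists (s n); exists n => //=.
  split; [lia|lia|]; have [t' e <-] := pq_NL (sNL n ltac:(lia)).
  by move: On; rewrite e.
- by move=> [K W] _ _ [n [_ K0n _] <-]; apply/subset_closure/sNL.
have su : limit_set s u.
  apply/limit_setP => K W uW.
  have [_ [[n [Kn _ _] <-] Wn]] := Hu (K, setT) (conj openT (fun _ _ => I)) W uW.
  by exists n.
exists u => //; apply: contrapT => nLu.
have /hreg [V uV clV] : nbhs u (~` L).
  by apply: open_nbhs_nbhs; split; [exact: closed_openC|].
have oW : open (~` closure V) by apply/closed_openC/closed_closure.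
have LW : L `<=` ~` closure V by move=> x Lx /clV.
have [_ [[n [_ _ Wn] <-] Vn]] := Hu (0%N, ~` closure V) (conj oW LW) V uV.
exact/Wn/subset_closure.
Qed.

Lemma limit_set_pq (s : nat -> X) (B : set X) K0 :
  (forall n, (K0 < n)%N -> (N `\` L) (s n)) ->
  limit_set s `<=` B -> (forall x, B x -> ~ L x) ->
  limit_set (fun n => pq (s n)) `<=` pq @` B.
Proof.
move=> sNL sB BL [t|] st.
  by exists (val t); [exact/sB/(limit_set_pq_Some sNL)|exact: pq_val].
by have [l Ll /sB /BL] := limit_set_pq_None sNL st.
Qed.

End LimitSets.

Section Solutions.
Context (U : set X) (f : X -> X).

Lemma solution_pq (tau : int -> X) x : solution U f x tau ->
  (forall n, (N `\` L) (tau n)) ->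
  solution setT (fP N L f) (pq x) (fun n => pq (tau n)).
Proof.
move=> [t0 tU tf] tNL; split => //= [|n]; first by rewrite t0.
by have [t e ex] := pq_NL (tNL n); rewrite e /= ex tf.
Qed.

Lemma solution_pval_f (sigma : int -> PQ) y d j :
  solution setT (fP N L f) y sigma -> sigma j <> None -> sigma (j + 1)%R <> None ->
  f (pval d (sigma j)) = pval d (sigma (j + 1)%R).
Proof.
move=> [_ _ /(_ j)]; case: (sigma j) => [t|] //=.
by case: (sigma (j + 1)%R) => [t'|] // /pq_Some.
Qed.

Lemma solution_pval (sigma : int -> PQ) y d : N `<=` U ->
  solution setT (fP N L f) y sigma -> (forall n, sigma n <> None) ->
  solution U f (pval d y) (fun n => pval d (sigma n)).
Proof.
move=> NU sol sN; split => //= [|n|n]; first by case: sol => ->.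
  by apply: NU; case: (pval_NL d (sN n)).
exact: solution_pval_f sol (sN n) (sN _).
Qed.

Lemma solution_fP_None (sigma : int -> PQ) y k j :
  solution setT (fP N L f) y sigma -> sigma k = None -> (k <= j)%R -> sigma j = None.
Proof.
move=> [_ _ sf] sk kj.
have -> : j = (k + Posz (absz (j - k)))%R by lia.
elim: (absz _) => [|i IH]; first by rewrite addr0.
by rewrite -[i.+1]addn1 PoszD addrA -sf IH.
Qed.

Lemma InvS_pq (K : set X) : N `<=` U -> K `<=` N `\` L ->
  InvS setT (fP N L f) (pq @` K) = pq @` InvS U f K.
Proof.
move=> NU KNL; apply/seteqP; split.
  move=> y [_ [s [sol sK]]].
  have sNone n : s n <> None.
    by have [x Kx <-] := sK n; have [t -> _] := pq_NL (KNL _ Kx).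
  have [d _ _] := sK 0%R.
  have sK' n : K (pval d (s n)).
    by have [z Kz <-] := sK n; have [t e ez] := pq_NL (KNL _ Kz); rewrite e /= ez.
  exists (pval d y); last by apply: pq_pval; case: sol => <- _ _.
  split; first by case: sol => <- _ _; apply: sK'.
  by exists (fun n => pval d (s n)); split => //; apply: solution_pval.
move=> _ [x [Kx [tau [sol tK]]] <-]; split; first by exists x.
exists (fun n => pq (tau n)); split; first by apply: solution_pq sol _ => n; apply/KNL/tK.
by move=> n; exists (tau n).
Qed.

End Solutions.

End PointedQuotient.

Lemma hat_lt_irr (P : finType) (lt : rel P) : irreflexive lt -> irreflexive (hat_lt lt).
Proof. by move=> lt_irr [p|] //=; rewrite lt_irr. Qed.

Lemma hat_lt_trans (P : finType) (lt : rel P) : transitive lt -> transitive (hat_lt lt).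
Proof. by move=> lt_trans [b|] [a|] [c|] //=; apply: lt_trans. Qed.

Section FiltrationPair.
Context {X : topologicalType} (hT : hausdorff_space X) (hreg : @regular_space X).
Variables (U : set X) (f : X -> X) (S : set X).
Variables (P : finType) (lt : rel P) (M : P -> set X) (N L : set X).
Hypothesis fc : forall x, U x -> {for x, continuous f}.
Hypothesis hMorse : Morse_decomposition U f S lt M.
Hypothesis hfilt : filtration_pair U f S N L.

Local Notation C := (closure (N `\` L)).
Local Notation pq := (pq N L).
Local Notation fP := (fP N L f).
Local Notation PQ := (pquot N L).

Lemma filtration_N_compact : compact N.
Proof. by case: hfilt => -[]. Qed.

Lemma filtration_L_compact : compact L.
Proof. by case: hfilt => -[_ []]. Qed.

Lemma filtration_L_closed : closed L.
Proof. exact: compact_closed hT filtration_L_compact. Qed.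

Lemma filtration_LN : L `<=` N.
Proof. by case: hfilt => -[_ []]. Qed.

Lemma filtration_NU : N `<=` U.
Proof. by case: hfilt => _ [NU _] _ _ _ x /NU /interior_subset. Qed.

Lemma filtration_C_isolating : isolating_neighborhood U f C.
Proof. by case: hfilt => _ _ []. Qed.

Lemma filtration_C_compact : compact C.
Proof. by case: filtration_C_isolating. Qed.

Lemma filtration_CN : C `<=` N.
Proof.
apply: (subset_trans (closureS (@subIsetl _ N (~` L)))).
exact: compact_closed hT filtration_N_compact.
Qed.

Lemma filtration_CU : C `<=` U.
Proof. exact: subset_trans filtration_CN filtration_NU. Qed.

Lemma filtration_S_InvS : S = InvS U f C.
Proof. by case: hfilt => _ _ [_ ->]. Qed.

Lemma filtration_S_interior : S `<=` interior C.
Proof. by rewrite filtration_S_InvS; case: filtration_C_isolating. Qed.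

Lemma filtration_S_C : S `<=` C.
Proof. by rewrite filtration_S_InvS => x []. Qed.

Lemma filtration_fL x : L x -> ~ C (f x).
Proof.
move=> Lx Cfx; case: hfilt => _ _ _ _ fLC.
have : (f @` L `&` C) (f x) by split => //; exists x.
by rewrite fLC.
Qed.

Lemma filtration_S_NL : S `<=` N `\` L.
Proof.
move=> x Sx; split; first exact/filtration_CN/filtration_S_C.
move=> /filtration_fL; apply; apply: filtration_S_C.
by rewrite filtration_S_InvS in Sx *; apply: InvS_f.
Qed.

(* otherwise compactness of [L] gives [u] in [L] with [f u] in the closure of
   every open [Q] containing [C], hence in [C] by regularity *)
Lemma filtration_separating_open :
  exists Q, [/\ open Q, C `<=` Q & forall z, L z -> ~ closure Q (f z)].
Proof.
apply: contrapT => nQ.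
have [||||u Lu Hu] := @compact_directed_cluster X L (set X)
  (fun Q => open Q /\ C `<=` Q) (fun Q => [set z | L z /\ closure Q (f z)])
  filtration_L_compact.
- by exists setT; split => //; exact: openT.
- move=> Q1 Q2 [oQ1 CQ1] [oQ2 CQ2]; exists (Q1 `&` Q2).
    by split; [exact: openI|move=> x Cx; split; [apply: CQ1|apply: CQ2]].
  by move=> z [Lz /closureI [c1 c2]]; split.
- move=> Q [oQ CQ]; apply: contrapT => noz; apply: nQ; exists Q; split => // z Lz clz.
  by apply: noz; exists z.
- by move=> Q _ z [].
have /hreg [V fuV clV] : nbhs (f u) (~` C).
  by apply: open_nbhs_nbhs; split; [exact/closed_openC/closed_closure|exact: filtration_fL].
have oW : open (~` closure V) by apply/closed_openC/closed_closure.
have CW : C `<=` ~` closure V by move=> x Cx /clV.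
have /(Hu _ (conj oW CW)) [z [[Lz clz] Iz]] : nbhs u (f @^-1` interior V).
  by apply: (fc (filtration_NU (filtration_LN Lu))); apply: nbhs_interior.
have /clz [w [nw Iw]] : nbhs (f z) (interior V).
  by apply: open_nbhs_nbhs; split; [exact: open_interior|].
by apply: nw; apply: subset_closure; apply: interior_subset.
Qed.

Lemma isolated_base_point : isolated_invariant_set setT fP [set None].
Proof.
have [Q [oQ CQ fLQ]] := filtration_separating_open.
pose K0 := N `&` f @^-1` (~` Q).
have cK0 : compact K0.
  have clK0 : closed K0.
    apply: (closed_setI_preimage fc) filtration_NU _ _; last exact: open_closedC.
    exact: compact_closed hT filtration_N_compact.
  exact: subclosed_compact clK0 filtration_N_compact (@subIsetl _ _ _).
pose N0 := [set None] `|` pq @` K0.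
(* no point of [pq @` K0] has an [fP]-preimage in [N0], because [f] maps [K0]
   outside [Q], which contains [N \ L] *)
have InvN0 : InvS setT fP N0 = [set None].
  apply/seteqP; split; last first.
    move=> _ ->; rewrite /InvS /=; split; first by left.
    by exists (fun _ => None); split => [|n]; [split|left].
  move=> [t|] // [_ [s [[s0 _ sf] sN0]]].
  have := sf (-1)%R; rewrite addNr s0; case E: (s (-1)%R) => [t'|] //= e.
  have := sN0 (-1)%R; rewrite E => -[//|[x' [Nx' nQx'] ex']].
  exfalso; apply: nQx'; rewrite (pq_Some ex') (pq_Some e); exact/CQ/subset_closure/NL_val.
exists N0; split; last by rewrite InvN0.
split => //; first exact/compactU/(pq_compact cK0 (@subIsetl _ _ _))/compact_set1.
rewrite InvN0 => _ ->.
pose W := interior (f @^-1` (~` closure Q)).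
have LW : L `<=` W.
  move=> z Lz; apply: (fc (filtration_NU (filtration_LN Lz))); apply: open_nbhs_nbhs.
  by split; [exact/closed_openC/closed_closure|exact: fLQ].
have : nbhs (None : PQ) (pqset_base W).
  by apply: open_nbhs_nbhs; split => //; apply: open_pqset_base => //; exact: open_interior.
apply: filterS => -[t|] Wt; last by left.
right; exists (val t); last exact: pq_val.
split; first by case: (NL_val t).
by move=> Qft; apply: (interior_subset Wt); exact: subset_closure.
Qed.

Lemma isolated_pq_Morse_set p : isolated_invariant_set setT fP (pq @` M p).
Proof.
have [Np [cNp NpU NpI] eMp] := Morse_set_isolated hMorse p.
have MpS : M p `<=` S := Morse_set_sub hMorse (p := p).
pose K := (Np `&` C) `&` f @^-1` C.
have cK : compact K.
  have clK : closed K.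
    apply: (closed_setI_preimage fc) => [x [/NpU //]||]; last exact: closed_closure.
    by apply: closedI; [exact: compact_closed hT cNp|exact: closed_closure].
  exact: subclosed_compact clK cNp (fun x h => h.1.1).
have KNL : K `<=` N `\` L.
  by move=> x [[_ Cx] Cfx]; split; [exact: filtration_CN|move=> /filtration_fL].
have MpK : M p `<=` K.
  move=> x Mx; split; first by split; [move: Mx; rewrite eMp => -[]|exact/filtration_S_C/MpS].
  exact/filtration_S_C/MpS/(Morse_set_f hMorse).
have MpE : M p = InvS U f K.
  apply/seteqP; split => x.
    move=> Mx; split; first exact: MpK.
    move: Mx; rewrite eMp => -[_ [tau [sol tNp]]]; exists tau; split => // n.
    by apply: MpK; rewrite eMp; apply: InvS_solution sol tNp n.
  rewrite eMp => -[Kx [tau [sol tK]]]; split; first exact: Kx.1.1.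
  by exists tau; split => // n; exact: (tK n).1.1.
have InvK : InvS setT fP (pq @` K) = pq @` M p.
  by rewrite MpE; exact: InvS_pq filtration_NU KNL.
exists (pq @` K); split; last by rewrite InvK.
split => //; first exact: pq_compact cK (fun x h => (KNL x h).1).
rewrite InvK => _ [x Mx <-]; have Sx := MpS _ Mx.
have xK : nbhs x K.
  have NpX : nbhs x Np by apply: NpI; rewrite -eMp.
  have CfX : nbhs x (f @^-1` C).
    apply: (fc (NpU _ (nbhs_singleton NpX))); apply: filtration_S_interior.
    exact/MpS/(Morse_set_f hMorse).
  exact: filterI (filterI NpX (filtration_S_interior Sx)) CfX.
have [t e ex] := pq_NL (filtration_S_NL Sx).
have : nbhs (Some t : PQ) (pqset (interior K)).
  apply: open_nbhs_nbhs; split; last by rewrite /= ex.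
  exact/open_pqset/open_interior/filtration_L_closed.
rewrite -e; apply: filterS => -[t'|] //= Kt'.
by exists (val t'); [exact: interior_subset|exact: pq_val].
Qed.

Lemma limit_set_pq_Morse_set (s : nat -> X) K0 p :
  (forall n, (K0 < n)%N -> (N `\` L) (s n)) -> limit_set s `<=` M p ->
  limit_set (fun n => pq (s n)) `<=` pq @` M p.
Proof.
move=> sNL sM; apply: (limit_set_pq filtration_L_closed filtration_C_compact hreg sNL sM).
by move=> x /(Morse_set_sub hMorse) /filtration_S_NL [].
Qed.

Lemma fP_Morse_alternative_NL (s : int -> PQ) y : solution setT fP y s ->
  (forall n, s n <> None) -> Morse_alternative fP (hat_lt lt) (hat_M N L M) s.
Proof.
move=> sol sN; have [s0 _ _] := sol; subst y; case: (s 0%R) (sN 0%R) => [t0|] // _.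
pose xs n := pval (val t0) (s n).
have xsol : solution U f (xs 0%R) xs := solution_pval _ filtration_NU sol sN.
have xNL n : (N `\` L) (xs n) := pval_NL _ (sN n).
have xS n : S (xs n).
  rewrite filtration_S_InvS; apply: (InvS_solution xsol) => m.
  exact/subset_closure/xNL.
have pqx n : pq (xs n) = s n := pq_pval _ (sN n).
have [[p rp]|[p1 [p2 [l12 [om1 al2]]]]] := Morse_dichotomy hMorse (xS 0%R) xsol xS.
  by left; exists (Some p) => _ [n _ <-]; exists (xs n); [apply: rp; exists n|].
right; exists (Some p1), (Some p2); split => //; split.
  rewrite (omega_solE sol) (eq_limit_set (t := fun n => pq (xs (Posz n)))) => [|n].
    by apply: (limit_set_pq_Morse_set (K0 := 0%N)) => //; rewrite -(omega_solE xsol).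
  by rewrite pqx.
rewrite alpha_solE (eq_limit_set (t := fun n => pq (xs (- Posz n)%R))) => [|n].
  exact: (limit_set_pq_Morse_set (K0 := 0%N)) al2.
by rewrite pqx.
Qed.

(* once a solution reaches the base point it stays there, so its
   omega-limit set is [[L]], while its past is a backward orbit in [C] *)
Lemma fP_Morse_alternative_base (s : int -> PQ) y m k : solution setT fP y s ->
  s m <> None -> s k = None -> Morse_alternative fP (hat_lt lt) (hat_M N L M) s.
Proof.
move=> sol sm sk.
have sN j : (j <= m)%R -> s j <> None.
  by move=> jm sj; apply: sm; apply: solution_fP_None sol sj jm.
case: (s m) sm => [t|] // _.
pose M0 := absz m.
pose ys n := pval (val t) (s (- Posz (n + M0))%R).
have yNL n : (N `\` L) (ys n) by apply/pval_NL/sN; lia.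
have yf n : f (ys n.+1) = ys n.
  have e : (- Posz (n.+1 + M0) + 1 = - Posz (n + M0))%R by lia.
  by rewrite /ys (solution_pval_f _ sol) ?e //; apply: sN; lia.
have [q yq] := backward_limit_sub_Morse_set hT fc filtration_C_compact filtration_CU
  (fun n => subset_closure (yNL n)) yf hMorse filtration_S_InvS.
right; exists None, (Some q); split => //; split.
  rewrite (omega_solE sol) => -[t'|] // st; exfalso.
  have : nbhs (Some t' : PQ) (pqset setT).
    by apply: open_nbhs_nbhs; split; [exact: open_pqset filtration_L_closed openT|].
  move=> /((limit_setP _ _).1 st (absz k)) [n [kn]].
  by rewrite (solution_fP_None sol sk) //; lia.
rewrite alpha_solE -(limit_set_shift _ M0).
rewrite (eq_limit_set (t := fun n => pq (ys n))) => [|n].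
  exact: (limit_set_pq_Morse_set (K0 := 0%N)) yq.
by rewrite pq_pval //; apply: sN; lia.
Qed.

Lemma fP_Morse_alternative (s : int -> PQ) y : solution setT fP y s ->
  Morse_alternative fP (hat_lt lt) (hat_M N L M) s.
Proof.
move=> sol; case: (pselect (exists k, s k = None)) => [[k sk]|nN]; last first.
  by apply: fP_Morse_alternative_NL sol _ => n sn; apply: nN; exists n.
case: (pselect (exists m, s m <> None)) => [[m sm]|nS].
  exact: fP_Morse_alternative_base sol sm sk.
by left; exists None => _ [n _ <-]; apply: contrapT => sn; apply: nS; exists n.
Qed.

Lemma hat_M_sub_InvS a : hat_M N L M a `<=` InvS setT fP setT.
Proof.
case: a => [p|] y /=; last first.
  by move=> ->; split => //; exists (fun _ => None); split => [|n]; [split|].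
move=> [x Mx <-]; have := Morse_set_sub hMorse Mx.
rewrite filtration_S_InvS => -[_ [tau [sol tC]]].
have tNL n : (N `\` L) (tau n).
  by apply: filtration_S_NL; rewrite filtration_S_InvS; exact: InvS_solution sol tC n.
by split => //; exists (fun n => pq (tau n)); split => //; exact: solution_pq sol tNL.
Qed.

Lemma hat_M_disjoint a b : a != b -> hat_M N L M a `&` hat_M N L M b = set0.
Proof.
have pqM p x : M p x -> pq x <> None.
  by move=> /(Morse_set_sub hMorse) /filtration_S_NL /pq_NL [t ->].
move=> ab; apply/seteqP; split => // y [].
case: a b ab => [p|] [q|] //= pq_ne; last by move=> -> [x /pqM].
  move=> [x1 M1 <-] [x2 M2 e]; move: M1.
  rewrite -(pq_inj (filtration_S_NL (Morse_set_sub hMorse M2)) e) => M1.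
  by move: pq_ne; rewrite (Morse_index_unique hMorse M1 M2) eqxx.
by move=> [x /pqM nN <-] /nN.
Qed.

Lemma hat_Morse_decomposition :
  Morse_decomposition setT fP (InvS setT fP setT) (hat_lt lt) (hat_M N L M).
Proof.
split.
- split; [exact/hat_lt_irr/(Morse_lt_irr hMorse)|exact/hat_lt_trans/(Morse_lt_trans hMorse)].
- by move=> a; apply: hat_M_sub_InvS.
- by move=> a b; apply: hat_M_disjoint.
- by case=> [p|]; [exact: isolated_pq_Morse_set|exact: isolated_base_point].
- by move=> x s _ sol _; apply: fP_Morse_alternative sol.
Qed.

End FiltrationPair.

Theorem mainTheorem14 (R : realType) (X : metricType R)
  (U : set X) (f : X -> X) (S : set X)
  (P : finType) (lt : rel P) (M : P -> set X) (N L : set X) :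
  locally_compact [set: X] ->
  open U ->
  (forall x, U x -> {for x, continuous f}) ->
  isolated_invariant_set U f S ->
  Morse_decomposition U f S lt M ->
  filtration_pair U f S N L ->
  Morse_decomposition (@setT (pquot N L)) (fP N L f)
    (InvS (@setT (pquot N L)) (fP N L f) (@setT (pquot N L)))
    (hat_lt lt) (hat_M N L M).
Proof.
move=> _ _ fc _ hMorse hfilt.
exact (hat_Morse_decomposition (@metric_hausdorff R X) (@uniform_regular X) fc hMorse hfilt).
Qed.
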